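(* For each $2p\in\{26, 266, 40, 56, 88, 104, 136, 152, 184, 200, 232, 248, 280, 296, 328, 344, 34, 58, 82, 106, 130, 154, 178, 202, 226, 250, 274, 298, 322, 346\}$ there exists a cyclic DCA$(4,2p+1;2p)$ satisfying P1 and P2.
   Context: A difference covering array DCA$(k,\eta;n)$ over $\mathbb{Z}_n$ (a cyclic DCA) is an $\eta\times k$ matrix $Q=[q(i,j)]$ with entries in $\mathbb{Z}_n$ such that for every pair of distinct columns $j,j'$ the multiset $\{q(i,j)-q(i,j') : 0\le i\le \eta-1\}$ contains every element of $\mathbb{Z}_n$ at least once. A DCA$(k,n+1;n)$ is taken in normalized form: all entries of its last row (row $n$) and last column (column $k-1$) equal $0$. It satisfies P1 if $0$ occurs at least twice in every column, and P2 if for all distinct columns $j,j'$ with $j\neq k-1\neq j'$, the set $\{q(i,j)-q(i,j') : 0\le i\le n-1\}$ equals $\mathbb{Z}_n\setminus\{0\}$. *)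

From mathcomp Require Import all_boot all_order all_algebra.
Set Implicit Arguments. Unset Strict Implicit. Unset Printing Implicit Defensive.
Import GRing.Theory.
Local Open Scope ring_scope.

(* A (cyclic) difference covering array DCA(k, eta; n) over Z_n:
   an eta x k matrix with entries in 'Z_n (n >= 2 so that 'Z_n is Z/nZ). *)
Definition is_DCA (n eta k : nat) (Q : 'M['Z_n]_(eta, k)) : Prop :=
  forall j j' : 'I_k, j != j' ->
    forall x : 'Z_n, exists i : 'I_eta, Q i j - Q i j' = x.

Definition normalized_DCA (n k' : nat) (Q : 'M['Z_n]_(n.+1, k'.+1)) : Prop :=
  (forall j, Q ord_max j = 0) /\ (forall i, Q i ord_max = 0).

Definition DCA_P1 (n k' : nat) (Q : 'M['Z_n]_(n.+1, k'.+1)) : Prop :=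
  forall j, (2 <= #|[set i | Q i j == 0%R]|)%N.

Definition DCA_P2 (n k' : nat) (Q : 'M['Z_n]_(n.+1, k'.+1)) : Prop :=
  forall j j' : 'I_k'.+1, j != j' -> j != ord_max -> j' != ord_max ->
    [set Q i j - Q i j' | i in [set i : 'I_n.+1 | (i < n)%N]] = [set~ (0%R : 'Z_n)].

Definition theorem15_orders : seq nat :=
  [:: 26; 266; 40; 56; 88; 104; 136; 152; 184; 200; 232; 248; 280; 296; 328;
      344; 34; 58; 82; 106; 130; 154; 178; 202; 226; 250; 274; 298; 322; 346].

From Stdlib Require Import BinNat.
From mathcomp Require Import all_boot all_order all_algebra.
Set Implicit Arguments. Unset Strict Implicit. Unset Printing Implicit Defensive.
Import GRing.Theory.

(* Take three permutations of 0..n-1 such that for any two of them the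
   row-wise differences mod n run over exactly the nonzero residues. Adding
   a zero row and a zero column gives a normalized DCA(4, n+1; n): the zero
   row supplies the difference 0 for every pair of columns, the differences
   between two permutation columns cover the rest (which is P2), and a
   permutation column minus the zero column, or its negative, covers all of
   Z_n. Each permutation column contains 0 once, besides the zero row, which
   gives P1. For each of the thirty orders the first permutation is the
   identity and the other two are the tables b, c below, whose properties are
   checked by evaluation. *)

Definition diffs_mod (n : nat) (X Y : seq nat) : seq nat :=
  [seq (nth 0 X i + n - nth 0 Y i) %% n | i <- iota 0 n].

Lemma diffs_mod_iota n X Y : 0 \notin diffs_mod n X Y ->
  subseq (iota 1 n.-1) (sort leq (diffs_mod n X Y)) ->
  diffs_mod n X Y =i iota 1 n.-1.
Proof.
move=> D_neq0 iota_sub x; apply/idP/idP => [x_in_D | /(mem_subseq iota_sub)].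
  have x_gt0 : 0 < x by rewrite lt0n; apply: contraNneq D_neq0 => <-.
  have /mapP[i] := x_in_D; rewrite mem_iota => /andP[_ i_lt_n] x_def.
  have n_gt0 : 0 < n by apply: leq_ltn_trans i_lt_n.
  by rewrite mem_iota add1n prednK // x_gt0 x_def ltn_pmod.
by rewrite mem_sort.
Qed.

Local Open Scope ring_scope.

Section ResiduesModN.
Variable n : nat.
Hypothesis n_gt1 : (1 < n)%N.

Lemma Zp_val_lt (v : 'Z_n) : (val v < n)%N.
Proof. by rewrite -[X in (_ < X)%N](Zp_cast n_gt1) ltn_ord. Qed.

Lemma Zp_val_iota (v : 'Z_n) : (val v \in iota 1 n.-1) = (v != 0).
Proof.
by rewrite mem_iota add1n prednK ?(ltnW n_gt1) // Zp_val_lt andbT lt0n -val_eqE.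
Qed.

Lemma Zp_natB_val (x y : nat) : (y < n)%N ->
  val (x%:R - y%:R : 'Z_n) = ((x + n - y) %% n)%N.
Proof.
move=> y_lt_n; rewrite -val_Zp_nat // natrB; last first.
  by rewrite (leq_trans (ltnW y_lt_n)) // leq_addl.
by rewrite natrD pchar_Zp // addr0.
Qed.

Lemma perm_iota_lt (X : seq nat) i : perm_eq X (iota 0 n) -> (i < n)%N ->
  (nth 0 X i < n)%N.
Proof.
move=> permX i_lt_n; have : nth 0 X i \in X.
  by rewrite mem_nth // (perm_size permX) size_iota.
by rewrite (perm_mem permX) mem_iota.
Qed.

Lemma perm_iota_nth_onto (X : seq nat) : perm_eq X (iota 0 n) ->
  forall v : 'Z_n, exists2 i, (i < n)%N & (nth 0 X i)%:R = v.
Proof.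
move=> permX v; have vX : val v \in X by rewrite (perm_mem permX) mem_iota Zp_val_lt.
exists (index (val v) X); first by move: vX; rewrite -index_mem (perm_size permX) size_iota.
by rewrite nth_index // natr_Zp.
Qed.

Lemma diffs_modP (X Y : seq nat) (v : 'Z_n) : perm_eq Y (iota 0 n) ->
  reflect (exists2 i, (i < n)%N & (nth 0 X i)%:R - (nth 0 Y i)%:R = v)
          (val v \in diffs_mod n X Y).
Proof.
move=> permY; apply: (iffP mapP) => [[i] | [i i_lt_n <-]].
  rewrite mem_iota => i_lt_n vE; exists i => //.
  by apply: val_inj; rewrite Zp_natB_val ?perm_iota_lt.
by exists i; rewrite ?mem_iota ?Zp_natB_val ?perm_iota_lt.
Qed.

Lemma diffs_mod_nonzero (X Y : seq nat) : perm_eq Y (iota 0 n) ->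
  diffs_mod n X Y =i iota 1 n.-1 -> forall v : 'Z_n,
  (exists2 i, (i < n)%N & (nth 0 X i)%:R - (nth 0 Y i)%:R = v) <-> v != 0.
Proof.
move=> permY diffsXY v; rewrite -Zp_val_iota -diffsXY.
by split=> /(diffs_modP _ _ permY).
Qed.

End ResiduesModN.

Lemma lt_ord_max k (j : 'I_k.+1) : (j < k)%N = (j != ord_max).
Proof. by rewrite -val_eqE /= ltn_neqAle -ltnS ltn_ord andbT. Qed.

Definition cols_matrix (n k : nat) (col : nat -> seq nat) : 'M['Z_n]_(n.+1, k.+1) :=
  \matrix_(i, j) if (i < n)%N && (j < k)%N then (nth 0 (col j) i)%:R else 0.

Section ColumnsMatrix.
Variables (n k : nat) (col : nat -> seq nat).
Hypothesis n_gt1 : (1 < n)%N.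
Hypothesis col_perm : forall j, (j < k)%N -> perm_eq (col j) (iota 0 n).
Hypothesis col_diffs : forall j j', (j < k)%N -> (j' < k)%N -> j != j' ->
  diffs_mod n (col j) (col j') =i iota 1 n.-1.

Local Notation Q := (cols_matrix n k col).

Lemma cols_matrixE (i : 'I_n.+1) (j : 'I_k.+1) : (i < n)%N -> (j < k)%N ->
  Q i j = (nth 0 (col j) i)%:R.
Proof. by move=> i_lt_n j_lt_k; rewrite mxE i_lt_n j_lt_k. Qed.

Lemma cols_matrix_inord (i : nat) (j : 'I_k.+1) : (i < n)%N -> (j < k)%N ->
  Q (inord i) j = (nth 0 (col j) i)%:R.
Proof. by move=> i_lt_n j_lt_k; rewrite cols_matrixE ?(inordK (ltnW i_lt_n)). Qed.

Lemma cols_matrix_last_row j : Q ord_max j = 0.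
Proof. by rewrite mxE ltnn. Qed.

Lemma cols_matrix_last_col i : Q i ord_max = 0.
Proof. by rewrite mxE ltnn andbF. Qed.

Lemma cols_matrix_normalized : normalized_DCA Q.
Proof. by split=> [j|i]; rewrite ?cols_matrix_last_row ?cols_matrix_last_col. Qed.

Lemma cols_matrix_col_onto (j : 'I_k.+1) (v : 'Z_n) : j != ord_max ->
  exists2 i : 'I_n.+1, i != ord_max & Q i j = v.
Proof.
rewrite -lt_ord_max => j_lt_k.
have [i i_lt_n <-] := perm_iota_nth_onto n_gt1 (col_perm j_lt_k) v.
exists (inord i); last by rewrite cols_matrix_inord.
by rewrite -val_eqE /= (inordK (ltnW i_lt_n)) neq_ltn i_lt_n.
Qed.

Lemma cols_matrix_diff_nonzero (j j' : 'I_k.+1) (v : 'Z_n) :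
  j != j' -> j != ord_max -> j' != ord_max ->
  (exists2 i : 'I_n.+1, (i < n)%N & Q i j - Q i j' = v) <-> v != 0.
Proof.
rewrite -!lt_ord_max => neq_jj' j_lt_k j'_lt_k.
rewrite -(diffs_mod_nonzero n_gt1 (col_perm j'_lt_k) (col_diffs j_lt_k j'_lt_k neq_jj')).
split=> [[i i_lt_n] | [i i_lt_n]].
  by rewrite !cols_matrixE // => <-; exists i.
by exists (inord i); rewrite ?(inordK (ltnW i_lt_n)) ?cols_matrix_inord.
Qed.

Lemma cols_matrix_P1 : DCA_P1 Q.
Proof.
move=> j; have [i0 i0_neq_max Qi0j] : exists2 i0 : 'I_n.+1, i0 != ord_max & Q i0 j = 0.
  have [->|j_neq_max] := eqVneq j ord_max; last exact: cols_matrix_col_onto.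
  by exists ord0; rewrite ?cols_matrix_last_col // -val_eqE /= eq_sym -lt0n ltnW.
have zeros : [set i0; ord_max] \subset [set i | Q i j == 0].
  by apply/subsetP => i; rewrite !inE => /pred2P[]->; rewrite ?Qi0j ?cols_matrix_last_row.
by rewrite (leq_trans _ (subset_leq_card zeros)) // cards2 i0_neq_max.
Qed.

Lemma cols_matrix_P2 : DCA_P2 Q.
Proof.
move=> j j' neq_jj' j_neq_max j'_neq_max; apply/setP => v.
have diffE := cols_matrix_diff_nonzero v neq_jj' j_neq_max j'_neq_max.
rewrite in_setC1; apply/imsetP/idP => [[i] | v_neq0].
  by rewrite inE => i_lt_n vE; apply/diffE; exists i.
by have [i i_lt_n <-] := diffE.2 v_neq0; exists i; rewrite ?inE.
Qed.

Lemma cols_matrix_DCA : is_DCA Q.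
Proof.
move=> j j' neq_jj' v.
have [j_max | j_neq_max] := eqVneq j ord_max.
  have j'_neq_max : j' != ord_max by rewrite -j_max eq_sym.
  have [i _ Qij'] := cols_matrix_col_onto (- v) j'_neq_max.
  by exists i; rewrite j_max cols_matrix_last_col Qij' sub0r opprK.
have [j'_max | j'_neq_max] := eqVneq j' ord_max.
  have [i _ Qij] := cols_matrix_col_onto v j_neq_max.
  by exists i; rewrite j'_max cols_matrix_last_col Qij subr0.
have [->|v_neq0] := eqVneq v 0.
  by exists ord_max; rewrite !cols_matrix_last_row subrr.
have [i _ <-] := (cols_matrix_diff_nonzero v neq_jj' j_neq_max j'_neq_max).2 v_neq0.
by exists i.
Qed.

End ColumnsMatrix.

Local Close Scope ring_scope.

(* Phrased with [sort] and [subseq] so that evaluation is quasi-linear in n. *)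
Definition cols_ok (n k : nat) (col : nat -> seq nat) : bool :=
  [&& 1 < n,
      all (fun j => sort leq (col j) == iota 0 n) (iota 0 k) &
      all (fun j => all (fun j' => (j != j') ==>
            let D := diffs_mod n (col j) (col j') in
            (0 \notin D) && subseq (iota 1 n.-1) (sort leq D))
        (iota 0 k)) (iota 0 k)].

Lemma cols_ok_DCA n k col : cols_ok n k col ->
  exists Q : 'M['Z_n]_(n.+1, k.+1),
    is_DCA Q /\ normalized_DCA Q /\ DCA_P1 Q /\ DCA_P2 Q.
Proof.
case/and3P => n_gt1 /allP sorted_cols /allP diff_cols.
have col_perm j : j < k -> perm_eq (col j) (iota 0 n).
  move=> j_lt_k; apply/(perm_sortP leq_total leq_trans anti_leq).
  by rewrite (eqP (sorted_cols j _)) ?mem_iota // (sorted_sort leq_trans (iota_sorted 0 n)).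
have col_diffs j j' : j < k -> j' < k -> j != j' ->
    diffs_mod n (col j) (col j') =i iota 1 n.-1.
  move=> j_lt_k j'_lt_k neq_jj'.
  have j_in : j \in iota 0 k by rewrite mem_iota.
  have /allP/(_ j') := diff_cols j j_in.
  by rewrite mem_iota neq_jj' => /(_ j'_lt_k)/andP[]; apply: diffs_mod_iota.
exists (cols_matrix n k col).
split; first exact: cols_matrix_DCA.
split; first exact: cols_matrix_normalized.
by split; [apply: cols_matrix_P1 | apply: cols_matrix_P2].
Qed.

Definition table_cols (n : nat) (b c : seq N) : nat -> seq nat :=
  nth [::] [:: iota 0 n; map N.to_nat b; map N.to_nat c].

Local Open Scope N_scope.
Definition b26 : seq N := [:: 17; 24; 22; 16; 14; 21; 19; 13; 11; 18; 3; 10; 8; 15; 0; 7; 5; 12; 23; 4; 2; 9; 20; 1; 25; 6].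
Definition c26 : seq N := [:: 12; 4; 18; 23; 11; 3; 17; 22; 10; 2; 16; 21; 9; 1; 15; 20; 8; 0; 14; 6; 7; 25; 13; 5; 19; 24].
Definition b266 : seq N := [:: 133; 143; 155; 165; 177; 187; 66; 76; 88; 98; 110; 120; 265; 9; 21; 31; 43; 186; 198; 208; 220; 230; 242; 119; 131; 141; 153; 163; 175; 52; 64; 74; 86; 96; 108; 251; 263; 7; 19; 29; 41; 184; 196; 206; 218; 228; 240; 117; 129; 139; 151; 161; 173; 50; 62; 72; 84; 94; 239; 249; 261; 5; 17; 27; 172; 182; 194; 204; 216; 93; 105; 115; 127; 137; 149; 26; 38; 48; 60; 70; 82; 225; 237; 247; 259; 3; 15; 158; 170; 180; 192; 202; 214; 91; 103; 113; 125; 135; 147; 24; 36; 46; 58; 68; 80; 223; 235; 245; 257; 1; 146; 156; 168; 178; 190; 200; 79; 89; 101; 111; 123; 0; 12; 22; 34; 44; 56; 199; 211; 221; 233; 243; 255; 132; 144; 154; 166; 176; 188; 65; 77; 87; 99; 109; 121; 264; 10; 20; 32; 42; 54; 197; 209; 219; 231; 241; 253; 130; 142; 152; 164; 174; 53; 63; 75; 85; 97; 107; 252; 262; 8; 18; 30; 40; 185; 195; 207; 217; 229; 106; 118; 128; 140; 150; 162; 39; 51; 61; 73; 83; 95; 238; 250; 260; 6; 16; 28; 171; 183; 193; 205; 215; 227; 104; 116; 126; 138; 148; 160; 37; 49; 59; 71; 81; 226; 236; 248; 258; 4; 14; 159; 169; 181; 191; 203; 213; 92; 102; 114; 124; 136;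 13; 25; 35; 47; 57; 69; 212; 224; 234; 246; 256; 2; 145; 157; 167; 179; 189; 201; 78; 90; 100; 112; 122; 134; 11; 23; 33; 45; 55; 67; 210; 222; 232; 244; 254].
Definition c266 : seq N := [:: 254; 243; 230; 219; 206; 195; 49; 38; 25; 14; 1; 256; 110; 99; 86; 75; 62; 51; 171; 160; 147; 136; 123; 112; 232; 221; 208; 197; 184; 40; 27; 16; 3; 258; 245; 101; 88; 77; 64; 53; 173; 162; 149; 138; 125; 114; 234; 223; 210; 199; 186; 175; 29; 18; 5; 260; 247; 236; 90; 79; 66; 55; 42; 31; 151; 140; 127; 116; 103; 92; 212; 201; 188; 177; 164; 153; 7; 262; 249; 238; 225; 214; 68; 57; 44; 33; 20; 142; 129; 118; 105; 94; 81; 203; 190; 179; 166; 155; 9; 264; 251; 240; 227; 216; 70; 59; 46; 35; 22; 11; 131; 120; 107; 96; 83; 72; 192; 181; 168; 157; 144; 133; 253; 242; 229; 218; 205; 194; 48; 37; 24; 13; 0; 255; 109; 98; 85; 74; 61; 183; 170; 159; 146; 135; 122; 244; 231; 220; 207; 196; 50; 39; 26; 15; 2; 257; 111; 100; 87; 76; 63; 52; 172; 161; 148; 137; 124; 113; 233; 222; 209; 198; 185; 174; 28; 17; 4; 259; 246; 235; 89; 78; 65; 54; 41; 30; 150; 139; 126; 115; 102; 224; 211; 200; 187; 176; 163; 19; 6; 261; 248; 237; 91; 80; 67; 56; 43; 32; 152; 141; 128; 117; 104; 93; 213; 202; 189; 178; 165; 154; 8; 263; 250; 239; 226; 215; 69;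 58; 45; 34; 21; 10; 130; 119; 106; 95; 82; 71; 191; 180; 167; 156; 143; 265; 252; 241; 228; 217; 204; 60; 47; 36; 23; 12; 132; 121; 108; 97; 84; 73; 193; 182; 169; 158; 145; 134].
Definition b40 : seq N := [:: 20; 14; 3; 19; 23; 30; 18; 13; 12; 6; 0; 33; 1; 31; 2; 10; 24; 34; 27; 17; 25; 4; 8; 37; 16; 35; 29; 11; 9; 36; 5; 22; 28; 26; 21; 15; 7; 39; 32; 38].
Definition c40 : seq N := [:: 5; 38; 1; 36; 12; 25; 27; 16; 31; 22; 20; 7; 14; 19; 3; 0; 2; 33; 9; 23; 35; 8; 34; 24; 18; 15; 37; 4; 6; 32; 10; 29; 39; 17; 13; 30; 28; 11; 26; 21].
Definition b56 : seq N := [:: 28; 32; 46; 20; 41; 27; 45; 42; 4; 8; 34; 54; 39; 3; 0; 9; 36; 51; 22; 52; 23; 14; 31; 25; 40; 16; 10; 12; 35; 18; 55; 37; 44; 43; 26; 49; 33; 50; 5; 1; 48; 11; 7; 38; 17; 19; 47; 29; 24; 21; 30; 6; 15; 2; 13; 53].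
Definition c56 : seq N := [:: 7; 48; 50; 11; 22; 1; 4; 35; 23; 40; 47; 52; 17; 25; 28; 26; 39; 53; 2; 51; 33; 0; 32; 10; 27; 24; 55; 43; 49; 38; 8; 5; 15; 37; 31; 21; 30; 6; 44; 34; 3; 29; 14; 20; 46; 9; 16; 13; 19; 42; 18; 12; 41; 54; 36; 45].
Definition b88 : seq N := [:: 44; 4; 38; 45; 50; 54; 80; 47; 73; 36; 14; 66; 18; 82; 27; 85; 84; 32; 78; 83; 74; 58; 0; 13; 65; 12; 1; 53; 79; 34; 48; 29; 17; 22; 25; 51; 10; 30; 67; 23; 57; 72; 49; 35; 55; 46; 56; 61; 76; 20; 70; 19; 87; 62; 16; 77; 52; 40; 9; 5; 2; 26; 64; 71; 28; 24; 11; 37; 63; 6; 3; 21; 41; 8; 86; 69; 7; 33; 75; 15; 68; 60; 81; 43; 39; 42; 59; 31].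
Definition c88 : seq N := [:: 11; 17; 39; 15; 74; 36; 35; 24; 3; 65; 63; 55; 2; 62; 81; 61; 56; 69; 87; 26; 18; 46; 44; 29; 75; 73; 76; 47; 70; 30; 43; 85; 67; 0; 52; 34; 50; 20; 25; 8; 59; 37; 28; 82; 77; 60; 19; 21; 80; 41; 7; 42; 86; 12; 51; 33; 64; 45; 68; 31; 10; 54; 83; 40; 48; 5; 22; 71; 38; 4; 9; 13; 27; 53; 79; 23; 14; 66; 49; 32; 16; 57; 84; 58; 78; 6; 1; 72].
Definition b104 : seq N := [:: 52; 20; 12; 49; 22; 2; 54; 40; 11; 76; 27; 66; 14; 78; 61; 56; 37; 28; 4; 10; 8; 50; 29; 15; 59; 84; 0; 25; 32; 89; 101; 88; 83; 95; 100; 17; 94; 98; 69; 26; 21; 55; 51; 9; 80; 18; 102; 16; 85; 44; 92; 1; 65; 73; 70; 63; 45; 79; 36; 42; 24; 33; 77; 48; 5; 91; 43; 90; 62; 97; 6; 64; 99; 103; 75; 81; 72; 57; 13; 47; 19; 60; 3; 82; 96; 34; 46; 7; 93; 23; 35; 39; 38; 58; 53; 71; 67; 87; 68; 74; 30; 41; 86; 31].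
Definition c104 : seq N := [:: 13; 19; 1; 87; 50; 72; 22; 101; 100; 67; 63; 84; 98; 65; 6; 53; 21; 11; 9; 60; 35; 32; 54; 89; 92; 59; 52; 55; 75; 56; 102; 61; 36; 10; 17; 79; 34; 96; 46; 0; 85; 66; 15; 103; 51; 24; 30; 69; 37; 99; 25; 23; 91; 88; 94; 41; 93; 74; 81; 44; 27; 64; 86; 77; 45; 39; 31; 20; 18; 40; 14; 29; 68; 82; 71; 95; 3; 16; 26; 57; 12; 83; 7; 76; 43; 80; 38; 97; 5; 90; 47; 78; 58; 8; 70; 33; 4; 42; 49; 28; 2; 48; 62; 73].
Definition b136 : seq N := [:: 68; 75; 45; 23; 46; 1; 77; 134; 32; 131; 15; 39; 18; 114; 21; 56; 64; 102; 133; 20; 98; 90; 101; 110; 19; 107; 109; 71; 42; 33; 4; 30; 128; 27; 0; 44; 6; 89; 132; 86; 43; 113; 61; 124; 66; 9; 69; 112; 123; 3; 37; 34; 54; 130; 13; 24; 67; 41; 87; 12; 78; 121; 93; 118; 120; 73; 125; 92; 85; 82; 100; 38; 16; 105; 111; 31; 126; 58; 117; 94; 35; 91; 55; 116; 14; 119; 84; 80; 115; 11; 135; 63; 2; 10; 76; 70; 59; 65; 29; 79; 62; 122; 17; 40; 8; 97; 5; 95; 26; 49; 60; 88; 83; 129; 103; 28; 106; 74; 52; 51; 72; 99; 47; 108; 50; 25; 53; 48; 104; 57; 127; 7; 22; 81; 36; 96].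
Definition c136 : seq N := [:: 17; 116; 82; 79; 54; 37; 76; 69; 2; 92; 25; 63; 43; 24; 132; 131; 106; 85; 58; 64; 83; 112; 52; 13; 57; 44; 114; 31; 123; 133; 127; 53; 42; 20; 68; 32; 78; 29; 111; 93; 129; 134; 90; 16; 67; 61; 84; 75; 97; 108; 10; 0; 22; 56; 4; 27; 65; 110; 9; 120; 62; 125; 60; 77; 50; 30; 122; 104; 119; 96; 47; 117; 18; 86; 49; 71; 6; 48; 36; 21; 105; 12; 1; 72; 46; 51; 15; 107; 73; 124; 89; 39; 35; 88; 135; 101; 41; 118; 74; 23; 126; 40; 34; 11; 26; 38; 130; 7; 115; 45; 103; 99; 113; 94; 81; 8; 19; 80; 87; 102; 98; 28; 33; 128; 59; 109; 100; 3; 66; 70; 121; 95; 14; 5; 55; 91].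
Definition b152 : seq N := [:: 76; 21; 92; 121; 149; 42; 18; 84; 7; 37; 4; 83; 15; 56; 6; 41; 86; 53; 68; 114; 61; 32; 118; 124; 110; 69; 107; 25; 93; 8; 90; 105; 47; 80; 44; 43; 125; 136; 0; 12; 111; 104; 91; 131; 5; 74; 150; 108; 23; 117; 20; 81; 103; 88; 10; 52; 87; 38; 75; 49; 151; 26; 34; 148; 78; 24; 67; 17; 101; 40; 30; 113; 63; 13; 59; 137; 95; 130; 142; 145; 126; 29; 51; 115; 143; 106; 102; 132; 39; 96; 36; 73; 45; 82; 62; 133; 22; 120; 100; 139; 77; 58; 2; 89; 46; 144; 27; 9; 135; 72; 134; 116; 70; 16; 19; 11; 31; 48; 50; 60; 94; 109; 140; 99; 79; 138; 54; 33; 55; 64; 3; 35; 127; 57; 98; 65; 119; 141; 147; 123; 85; 128; 122; 97; 14; 112; 28; 1; 71; 66; 146; 129].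
Definition c152 : seq N := [:: 19; 79; 25; 65; 148; 130; 24; 43; 48; 103; 49; 110; 3; 30; 55; 4; 146; 127; 73; 95; 132; 142; 119; 11; 10; 151; 53; 129; 124; 102; 120; 140; 40; 45; 121; 46; 116; 62; 76; 131; 88; 125; 109; 126; 108; 106; 7; 115; 136; 71; 17; 41; 51; 134; 64; 99; 32; 0; 13; 113; 91; 66; 96; 83; 90; 61; 117; 33; 84; 54; 47; 100; 128; 143; 69; 105; 133; 26; 111; 92; 122; 15; 21; 70; 59; 82; 23; 35; 72; 149; 137; 97; 60; 138; 87; 57; 2; 77; 9; 78; 52; 42; 104; 68; 18; 5; 29; 89; 27; 6; 63; 139; 34; 85; 38; 86; 67; 118; 16; 123; 50; 135; 81; 14; 107; 58; 39; 44; 8; 93; 37; 94; 147; 114; 80; 36; 56; 31; 141; 22; 12; 150; 112; 28; 98; 101; 1; 145; 75; 74; 144; 20].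
Definition b184 : seq N := [:: 92; 25; 99; 103; 34; 39; 126; 61; 131; 41; 17; 12; 10; 154; 32; 157; 147; 172; 155; 4; 168; 127; 24; 138; 163; 73; 91; 7; 88; 18; 16; 62; 179; 20; 113; 159; 122; 31; 8; 78; 101; 105; 145; 164; 112; 167; 0; 94; 27; 121; 83; 156; 74; 119; 30; 110; 77; 68; 19; 63; 136; 71; 14; 181; 59; 84; 57; 140; 56; 46; 182; 142; 75; 169; 89; 183; 160; 162; 166; 5; 133; 1; 11; 124; 80; 2; 144; 174; 29; 132; 153; 116; 115; 26; 134; 6; 123; 148; 67; 108; 114; 50; 128; 109; 139; 49; 33; 100; 90; 151; 102; 21; 85; 180; 65; 161; 66; 98; 86; 54; 165; 81; 97; 175; 42; 55; 104; 70; 3; 28; 129; 143; 152; 146; 96; 125; 141; 44; 23; 111; 178; 170; 38; 37; 35; 60; 51; 79; 176; 95; 22; 118; 117; 76; 171; 52; 130; 47; 72; 45; 13; 69; 107; 15; 106; 58; 64; 150; 93; 177; 43; 36; 120; 82; 158; 53; 173; 9; 137; 135; 40; 87; 48; 149].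
Definition c184 : seq N := [:: 23; 118; 183; 29; 37; 36; 145; 167; 99; 142; 106; 146; 157; 169; 68; 95; 83; 27; 175; 18; 80; 4; 28; 115; 67; 6; 79; 77; 112; 9; 172; 24; 51; 139; 66; 93; 149; 156; 132; 48; 126; 54; 114; 2; 176; 140; 92; 72; 19; 78; 159; 58; 21; 124; 17; 96; 158; 123; 63; 141; 56; 108; 57; 31; 171; 179; 74; 170; 88; 0; 97; 144; 155; 150; 122; 173; 120; 81; 137; 71; 22; 174; 143; 98; 152; 1; 76; 8; 38; 163; 34; 154; 161; 105; 33; 32; 107; 35; 135; 26; 5; 25; 180; 39; 91; 62; 130; 82; 125; 12; 113; 151; 86; 147; 178; 69; 61; 49; 153; 104; 102; 110; 42; 85; 181; 164; 60; 128; 43; 75; 90; 101; 160; 73; 20; 119; 134; 131; 46; 117; 53; 177; 89; 47; 11; 3; 111; 133; 40; 116; 129; 16; 166; 59; 15; 50; 109; 100; 84; 87; 182; 138; 103; 165; 45; 121; 44; 64; 14; 70; 7; 162; 136; 41; 65; 127; 30; 94; 10; 13; 168; 52; 148; 55].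
Definition b200 : seq N := [:: 100; 2; 33; 197; 167; 70; 179; 61; 96; 18; 15; 192; 191; 76; 51; 95; 198; 41; 97; 168; 115; 174; 194; 29; 22; 150; 28; 173; 79; 126; 90; 107; 184; 9; 52; 65; 103; 124; 26; 83; 60; 82; 193; 157; 87; 30; 139; 181; 176; 98; 0; 72; 111; 156; 11; 165; 118; 161; 57; 48; 5; 134; 74; 149; 142; 155; 148; 133; 199; 86; 10; 187; 64; 129; 172; 50; 23; 4; 106; 163; 120; 162; 153; 117; 7; 170; 99; 101; 56; 178; 135; 152; 31; 36; 171; 85; 38; 81; 17; 128; 125; 94; 154; 69; 62; 20; 68; 93; 119; 46; 40; 67; 144; 49; 92; 185; 143; 84; 186; 43; 80; 42; 113; 77; 127; 175; 59; 21; 136; 58; 145; 32; 151; 116; 131; 55; 158; 1; 177; 8; 45; 54; 34; 189; 182; 180; 188; 53; 39; 6; 25; 147; 24; 169; 12; 110; 63; 164; 66; 123; 140; 122; 73; 37; 47; 130; 19; 141; 16; 138; 105; 112; 71; 196; 91; 75; 78; 121; 137; 88; 35; 14; 114; 109; 102; 195; 108; 13; 159; 166; 160; 27; 104; 89; 132; 190; 183; 44; 146; 3].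
Definition c200 : seq N := [:: 25; 13; 194; 36; 73; 190; 162; 129; 102; 117; 5; 88; 103; 109; 178; 180; 59; 3; 146; 152; 60; 132; 151; 81; 51; 125; 184; 124; 7; 68; 135; 94; 158; 147; 56; 80; 57; 141; 79; 86; 155; 133; 74; 116; 153; 110; 42; 9; 62; 37; 100; 8; 63; 29; 58; 35; 19; 163; 26; 72; 70; 12; 71; 161; 11; 95; 144; 4; 167; 148; 15; 54; 118; 107; 16; 0; 137; 61; 199; 46; 10; 53; 154; 196; 33; 165; 122; 89; 22; 157; 45; 128; 23; 149; 138; 115; 179; 123; 106; 192; 175; 92; 191; 41; 171; 40; 104; 84; 127; 28; 170; 14; 78; 67; 176; 120; 17; 181; 119; 6; 90; 173; 34; 76; 113; 75; 2; 169; 182; 77; 185; 48; 183; 69; 18; 20; 139; 83; 186; 112; 30; 172; 111; 121; 131; 160; 64; 164; 87; 108; 50; 174; 38; 27; 136; 145; 97; 101; 39; 166; 195; 93; 114; 156; 193; 85; 82; 49; 142; 197; 65; 168; 143; 189; 98; 150; 99; 43; 66; 32; 140; 52; 31; 1; 91; 55; 24; 44; 47; 188; 130; 134; 198; 187; 96; 105; 177; 21; 159; 126].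
Definition b232 : seq N := [:: 116; 24; 154; 45; 49; 14; 17; 187; 196; 216; 74; 165; 172; 222; 200; 69; 151; 114; 226; 53; 129; 3; 217; 51; 183; 136; 146; 173; 169; 174; 201; 189; 204; 96; 31; 94; 209; 171; 185; 133; 52; 2; 127; 181; 12; 126; 160; 77; 132; 16; 138; 190; 57; 102; 153; 21; 212; 208; 0; 6; 164; 75; 137; 59; 111; 168; 210; 54; 124; 43; 72; 107; 140; 162; 47; 197; 84; 11; 105; 85; 175; 88; 143; 150; 44; 211; 89; 58; 207; 10; 202; 198; 25; 214; 73; 205; 7; 50; 122; 93; 65; 147; 32; 67; 228; 90; 42; 62; 156; 166; 41; 115; 71; 130; 194; 110; 145; 142; 128; 37; 103; 120; 159; 158; 76; 118; 176; 213; 4; 80; 34; 109; 225; 19; 224; 157; 167; 18; 119; 22; 33; 70; 40; 101; 199; 203; 215; 117; 188; 46; 193; 123; 231; 98; 79; 5; 148; 155; 177; 221; 92; 152; 178; 125; 108; 230; 184; 219; 63; 112; 39; 13; 68; 206; 29; 35; 20; 218; 135; 30; 1; 182; 48; 83; 100; 26; 170; 78; 220; 27; 113; 229; 180; 66; 95; 141; 81; 134; 97; 179; 28; 106; 191; 87; 121; 195; 192; 227; 223; 144; 55; 149; 161; 163; 8; 61; 23; 186; 82; 38; 60; 131; 56; 91; 36; 64; 15; 86; 9; 99; 104; 139].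
Definition c232 : seq N := [:: 29; 136; 45; 114; 97; 191; 36; 23; 221; 64; 109; 186; 86; 79; 202; 67; 230; 57; 173; 26; 137; 56; 132; 175; 142; 152; 5; 98; 41; 145; 180; 123; 101; 80; 163; 188; 177; 176; 228; 35; 61; 1; 99; 10; 6; 95; 34; 179; 21; 168; 197; 148; 217; 215; 92; 91; 213; 96; 116; 12; 198; 8; 140; 207; 166; 24; 93; 108; 62; 184; 82; 167; 133; 81; 75; 66; 158; 128; 4; 59; 222; 112; 11; 68; 22; 72; 52; 0; 134; 121; 53; 164; 201; 119; 100; 115; 46; 25; 117; 50; 105; 192; 146; 7; 205; 161; 181; 124; 78; 127; 196; 199; 102; 65; 13; 220; 203; 15; 178; 83; 14; 216; 155; 84; 38; 135; 194; 227; 85; 144; 141; 106; 185; 200; 210; 139; 70; 9; 27; 44; 89; 143; 226; 51; 214; 87; 195; 18; 94; 31; 204; 231; 126; 49; 131; 90; 190; 32; 20; 107; 157; 88; 165; 162; 54; 39; 42; 151; 182; 16; 3; 2; 150; 159; 58; 111; 77; 225; 171; 60; 73; 47; 74; 71; 37; 129; 125; 156; 110; 40; 212; 219; 229; 33; 43; 218; 113; 55; 28; 223; 189; 169; 211; 174; 17; 160; 122; 183; 206; 120; 147; 130; 153; 104; 138; 187; 118; 209; 149; 76; 30; 48; 154; 103; 69; 208; 19; 172; 193; 224; 170; 63].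
Definition b248 : seq N := [:: 124; 104; 218; 19; 222; 63; 127; 72; 12; 192; 98; 235; 179; 233; 132; 74; 148; 230; 226; 185; 118; 33; 135; 130; 13; 120; 165; 171; 190; 81; 15; 186; 172; 208; 149; 145; 14; 129; 4; 224; 60; 48; 133; 107; 243; 71; 23; 200; 181; 136; 242; 105; 11; 225; 151; 106; 84; 246; 101; 209; 27; 25; 0; 152; 220; 150; 2; 65; 43; 175; 164; 128; 108; 54; 69; 227; 126; 121; 204; 26; 244; 240; 10; 195; 75; 169; 167; 80; 213; 110; 138; 163; 91; 62; 36; 56; 21; 168; 18; 131; 94; 231; 76; 32; 77; 166; 5; 89; 123; 183; 55; 8; 44; 96; 237; 67; 139; 113; 156; 58; 189; 184; 221; 35; 155; 87; 196; 114; 68; 24; 205; 153; 134; 39; 236; 170; 53; 30; 162; 219; 206; 9; 28; 160; 92; 182; 173; 187; 203; 191; 199; 34; 228; 86; 157; 217; 102; 143; 79; 112; 116; 238; 50; 73; 174; 95; 207; 146; 29; 216; 125; 177; 3; 47; 188; 64; 85; 46; 109; 59; 70; 1; 215; 40; 141; 198; 31; 137; 142; 49; 20; 16; 197; 232; 66; 241; 214; 97; 223; 122; 52; 6; 194; 211; 38; 103; 100; 178; 61; 158; 45; 201; 83; 193; 140; 234; 117; 93; 202; 57; 99; 7; 180; 42; 212; 88; 82; 161; 115; 41; 239; 144; 229; 176; 245; 17; 78; 159; 119; 154; 37; 22; 90; 51; 147; 111; 247; 210].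
Definition c248 : seq N := [:: 31; 120; 112; 7; 82; 245; 33; 209; 27; 88; 64; 191; 181; 100; 67; 23; 147; 174; 16; 108; 162; 28; 121; 151; 146; 24; 198; 63; 202; 204; 41; 155; 139; 240; 30; 212; 242; 132; 235; 137; 11; 208; 110; 183; 85; 221; 129; 57; 106; 176; 72; 68; 61; 236; 49; 167; 3; 102; 22; 244; 37; 164; 124; 145; 123; 38; 224; 172; 13; 157; 211; 65; 243; 222; 182; 175; 194; 20; 19; 55; 115; 48; 128; 111; 213; 196; 225; 153; 122; 94; 80; 47; 189; 0; 131; 73; 26; 232; 32; 231; 66; 237; 187; 241; 178; 214; 6; 60; 141; 133; 233; 161; 99; 168; 86; 103; 117; 156; 51; 199; 234; 136; 166; 39; 217; 173; 107; 79; 91; 104; 246; 92; 226; 69; 163; 207; 42; 206; 40; 159; 18; 188; 219; 89; 83; 142; 158; 95; 21; 109; 81; 215; 203; 78; 238; 93; 98; 5; 1; 177; 75; 14; 144; 52; 138; 149; 169; 223; 154; 192; 150; 228; 197; 45; 195; 17; 58; 134; 230; 87; 218; 76; 9; 185; 210; 70; 62; 84; 10; 4; 59; 105; 114; 96; 200; 12; 50; 180; 97; 239; 179; 190; 152; 143; 90; 125; 171; 119; 170; 126; 54; 116; 77; 36; 227; 247; 74; 186; 56; 44; 53; 165; 35; 127; 43; 216; 8; 220; 29; 140; 25; 201; 130; 184; 46; 148; 2; 205; 193; 135; 34; 118; 160; 71; 229; 101; 113; 15].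
Definition b280 : seq N := [:: 140; 188; 64; 11; 212; 235; 127; 189; 86; 12; 75; 62; 101; 129; 77; 205; 258; 208; 16; 216; 225; 49; 279; 17; 156; 185; 87; 99; 7; 58; 40; 233; 134; 272; 103; 210; 228; 53; 9; 198; 20; 187; 196; 67; 92; 155; 34; 221; 94; 42; 45; 262; 181; 197; 23; 15; 252; 114; 176; 96; 110; 164; 81; 21; 122; 145; 167; 163; 269; 236; 0; 102; 214; 152; 237; 10; 32; 266; 111; 78; 180; 108; 239; 211; 182; 200; 234; 141; 246; 3; 115; 217; 19; 277; 263; 85; 204; 248; 84; 278; 230; 244; 199; 109; 116; 70; 173; 43; 69; 218; 255; 193; 56; 226; 157; 90; 268; 41; 249; 231; 60; 68; 79; 107; 8; 275; 133; 33; 46; 83; 5; 104; 61; 154; 26; 165; 44; 274; 71; 136; 175; 2; 159; 29; 82; 190; 47; 14; 131; 18; 55; 142; 6; 192; 203; 170; 148; 201; 31; 57; 220; 98; 144; 267; 128; 240; 247; 261; 224; 132; 125; 264; 139; 209; 183; 245; 178; 74; 191; 118; 65; 124; 259; 257; 202; 30; 13; 219; 229; 161; 160; 22; 166; 106; 143; 250; 238; 93; 271; 177; 100; 227; 39; 126; 172; 120; 207; 153; 174; 243; 35; 222; 59; 89; 146; 135; 4; 168; 256; 38; 25; 162; 1; 149; 28; 265; 213; 179; 251; 276; 215; 119; 254; 186; 223; 50; 232; 241; 91; 158; 260; 27; 184; 51; 88; 105; 194; 73; 54; 52; 195; 24; 63; 37; 66; 95; 138; 48; 151; 273; 150; 242;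 121; 97; 36; 270; 147; 123; 171; 76; 80; 113; 206; 112; 117; 130; 72; 253; 169; 137].
Definition c280 : seq N := [:: 35; 52; 146; 114; 83; 115; 184; 21; 249; 188; 190; 163; 29; 32; 238; 230; 239; 204; 194; 247; 80; 133; 103; 19; 62; 120; 153; 186; 14; 61; 25; 172; 121; 116; 17; 175; 187; 211; 271; 202; 185; 78; 63; 201; 3; 195; 208; 13; 162; 98; 135; 43; 149; 219; 256; 215; 203; 46; 34; 207; 50; 197; 199; 189; 151; 200; 33; 209; 141; 53; 140; 138; 1; 36; 206; 165; 233; 84; 47; 122; 265; 12; 276; 74; 168; 45; 48; 173; 9; 142; 30; 119; 136; 99; 176; 150; 38; 44; 7; 67; 130; 37; 223; 237; 222; 0; 174; 129; 261; 181; 235; 92; 49; 214; 166; 85; 27; 8; 31; 252; 250; 132; 76; 41; 137; 75; 182; 251; 169; 102; 15; 23; 109; 196; 192; 110; 118; 86; 164; 127; 245; 229; 143; 117; 191; 60; 73; 266; 24; 101; 155; 258; 58; 156; 56; 220; 227; 128; 167; 268; 145; 42; 66; 241; 57; 5; 144; 213; 161; 108; 95; 263; 96; 232; 16; 105; 39; 246; 244; 107; 160; 277; 273; 139; 71; 260; 94; 106; 221; 77; 65; 178; 18; 254; 97; 205; 112; 11; 87; 228; 90; 198; 236; 154; 243; 125; 64; 171; 2; 22; 70; 123; 216; 72; 152; 255; 278; 259; 234; 267; 40; 69; 279; 157; 147; 240; 54; 226; 264; 253; 275; 28; 81; 134; 257; 180; 193; 88; 217; 82; 10; 158; 26; 274;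 177; 210; 248; 131; 242; 68; 270; 183; 126; 179; 272; 55; 79; 4; 124; 231; 170; 269; 159; 59; 262; 100; 224; 89; 104; 93; 225; 212; 218; 91; 6; 20; 113; 51; 111; 148].
Definition b296 : seq N := [:: 148; 230; 18; 249; 34; 223; 79; 252; 211; 294; 129; 25; 250; 47; 135; 168; 52; 237; 162; 21; 91; 48; 191; 80; 115; 126; 217; 169; 90; 287; 86; 288; 67; 190; 113; 101; 10; 222; 30; 200; 204; 254; 82; 141; 226; 231; 270; 212; 156; 22; 154; 181; 59; 248; 119; 24; 219; 133; 97; 221; 51; 175; 158; 196; 60; 150; 2; 233; 43; 295; 102; 188; 123; 214; 0; 9; 35; 176; 46; 56; 75; 278; 146; 81; 122; 152; 286; 264; 27; 109; 273; 85; 19; 63; 103; 164; 275; 29; 290; 225; 258; 104; 174; 88; 116; 245; 66; 1; 178; 7; 118; 74; 68; 165; 257; 73; 291; 127; 62; 208; 20; 6; 153; 145; 283; 247; 31; 132; 83; 5; 282; 285; 234; 71; 87; 32; 220; 134; 241; 289; 267; 280; 143; 240; 172; 198; 130; 65; 185; 256; 199; 108; 124; 61; 202; 137; 251; 232; 78; 100; 76; 277; 274; 149; 210; 255; 15; 272; 139; 94; 50; 189; 235; 184; 262; 84; 276; 117; 17; 229; 227; 160; 206; 96; 228; 259; 209; 269; 266; 136; 183; 8; 180; 253; 105; 201; 186; 112; 239; 216; 243; 54; 42; 53; 203; 263; 38; 128; 195; 93; 193; 49; 26; 64; 55; 44; 147; 13; 89; 121; 187; 40; 37; 36; 99; 246;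 281; 173; 179; 16; 167; 28; 236; 14; 177; 213; 171; 151; 110; 72; 3; 69; 106; 41; 163; 271; 279; 12; 140; 142; 265; 293; 218; 95; 39; 4; 92; 205; 161; 111; 138; 215; 238; 292; 155; 125; 57; 77; 58; 192; 182; 284; 107; 45; 98; 33; 131; 159; 207; 224; 244; 261; 170; 157; 194; 144; 70; 268; 11; 166; 242; 197; 114; 120; 23; 260].
Definition c296 : seq N := [:: 37; 104; 28; 158; 122; 109; 67; 101; 162; 48; 151; 86; 218; 165; 107; 203; 49; 240; 252; 76; 39; 257; 147; 35; 42; 232; 215; 238; 114; 277; 198; 163; 130; 176; 247; 140; 210; 185; 14; 291; 289; 120; 292; 172; 10; 93; 126; 213; 73; 64; 108; 204; 279; 113; 11; 251; 98; 56; 47; 236; 191; 205; 54; 21; 233; 248; 36; 174; 103; 261; 166; 221; 274; 192; 148; 102; 15; 153; 278; 43; 66; 136; 260; 30; 194; 265; 94; 171; 154; 264; 175; 68; 135; 133; 211; 229; 242; 168; 188; 182; 90; 193; 22; 131; 41; 72; 4; 110; 186; 245; 134; 0; 121; 272; 271; 38; 167; 5; 246; 91; 201; 152; 7; 262; 79; 61; 75; 141; 2; 80; 44; 228; 178; 117; 115; 51; 65; 40; 71; 118; 199; 161; 155; 179; 145; 280; 268; 46; 259; 273; 195; 149; 225; 88; 84; 270; 23; 89; 214; 53; 9; 288; 196; 60; 266; 45; 275; 267; 146; 112; 12; 92; 143; 17; 142; 157; 169; 96; 231; 124; 55; 129; 254; 227; 249; 111; 263; 156; 258; 241; 99; 59;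 33; 200; 295; 206; 58; 57; 139; 187; 202; 184; 164; 220; 87; 29; 294; 19; 290; 8; 63; 62; 250; 281; 219; 269; 82; 208; 95; 286; 207; 97; 74; 173; 170; 16; 127; 20; 119; 209; 3; 77; 137; 256; 159; 52; 31; 253; 150; 235; 50; 216; 132; 70; 239; 13; 83; 181; 1; 144; 223; 116; 138; 69; 123; 85; 81; 24; 255; 222; 234; 125; 190; 285; 18; 224; 287; 180; 34; 177; 6; 189; 106; 128; 284; 78; 183; 237; 243; 283; 25; 32; 100; 244; 226; 105; 230; 293; 282; 160; 212; 276; 26; 217; 27; 197].
Definition b328 : seq N := [:: 164; 292; 129; 48; 90; 275; 64; 203; 201; 4; 153; 176; 221; 108; 40; 107; 33; 102; 177; 304; 122; 171; 16; 39; 138; 84; 261; 104; 133; 140; 320; 295; 25; 124; 253; 232; 154; 67; 296; 223; 185; 246; 249; 231; 45; 179; 94; 51; 194; 204; 273; 7; 165; 188; 248; 283; 322; 244; 229; 111; 285; 75; 198; 187; 9; 62; 321; 88; 77; 220; 200; 91; 169; 324; 17; 216; 197; 299; 302; 323; 1; 36; 0; 95; 250; 252; 190; 119; 178; 206; 65; 199; 266; 268; 128; 131; 306; 254; 89; 272; 282; 284; 294; 303; 106; 156; 181; 79; 21; 300; 80; 267; 234; 196; 137; 183; 141; 316; 70; 159; 34; 236; 161; 82; 2; 315; 32; 87; 305; 118; 157; 63; 18; 99; 8; 307; 290; 166; 149; 167; 173; 211; 312; 271; 297; 214; 233; 56; 50; 52; 288; 115; 218; 262; 257; 47; 66; 68;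 264; 127; 289; 310; 281; 151; 205; 219; 54; 251; 121; 148; 117; 112; 98; 3; 270; 155; 274; 78; 109; 240; 114; 116; 158; 59; 113; 228; 101; 135; 237; 227; 168; 291; 202; 174; 93; 239; 146; 11; 144; 195; 105; 308; 85; 15; 162; 287; 150; 23; 130; 20; 97; 96; 269; 235; 38; 279; 258; 318; 69; 224; 61; 19; 72; 207; 58; 100; 145; 24; 210; 212; 142; 139; 186; 86; 53; 152; 226; 243; 30; 43; 314; 180; 193; 280; 242; 27; 41; 319; 81; 182; 217; 311; 213; 260; 134; 247; 241; 230; 29; 208; 5; 276; 22; 83; 73; 278; 265; 191; 125; 35; 256; 103; 170; 326; 13; 136; 245; 147; 126; 31; 298; 46; 313; 71; 37; 259; 14; 123; 225; 92; 325; 175; 10; 12; 184; 215; 57; 132; 317; 192; 277; 28; 160; 143; 26; 172; 309; 55; 42; 44; 6; 163; 49; 238; 301; 120; 189; 60; 222; 327; 209; 286; 293; 263; 74; 76; 110; 255].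
Definition c328 : seq N := [:: 41; 3; 135; 56; 236; 187; 61; 58; 279; 27; 183; 96; 32; 53; 197; 218; 271; 122; 231; 136; 196; 195; 5; 17; 214; 75; 14; 176; 184; 93; 141; 137; 255; 99; 94; 216; 156; 203; 277; 257; 247; 205; 47; 28; 8; 43; 121; 202; 182; 147; 95; 140; 248; 317; 221; 34; 62; 171; 6; 252; 160; 51; 49; 194; 223; 42; 191; 48; 72; 29; 165; 26; 215; 219; 239; 88; 312; 59; 305; 186; 207; 243; 164; 260; 36; 69; 105; 321; 238; 2; 7; 44; 180; 253; 245; 178; 118; 98; 55; 208; 324; 109; 33; 233; 326; 315; 158; 268; 288; 293; 189; 170; 206; 11; 151; 52; 200; 149; 289; 145; 86; 35; 199; 0; 100; 83; 133; 265; 159; 154; 70; 276; 244; 251; 269; 322; 174; 250; 150; 60; 264; 91; 77; 177; 143; 18; 15; 120; 204; 229; 213; 314; 262; 114; 63; 284; 20; 85; 21; 89; 127; 210; 111; 68; 287; 267; 73; 306; 119; 179; 142; 240; 308; 107; 201; 138; 230; 74; 222; 280; 124; 309; 1; 298; 103; 227; 302; 76; 64; 115; 237; 130; 318; 266; 54; 188; 84; 283; 45; 290; 87; 275; 134; 300; 228; 123; 57; 153; 78; 299; 71; 112; 128; 291; 185; 273; 286; 226; 294; 152; 40; 131; 125; 65; 166; 19; 167; 192; 4; 101; 113; 274; 46; 90; 126; 232; 148; 139; 241; 106; 254; 67; 263; 272; 292; 307; 82; 97; 39; 282; 311; 316; 16; 325; 169; 217; 31; 50; 38; 24; 256; 181;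 297; 258; 23; 146; 79; 212; 168; 155; 285; 129; 102; 242; 198; 104; 80; 323; 225; 249; 310; 10; 175; 108; 320; 163; 25; 246; 327; 211; 30; 220; 172; 261; 37; 161; 319; 235; 110; 224; 144; 117; 173; 281; 278; 259; 190; 116; 132; 301; 81; 234; 303; 66; 270; 304; 296; 157; 209; 193; 295; 162; 22; 12; 92; 13; 9; 313].
Definition b344 : seq N := [:: 172; 136; 245; 299; 138; 23; 82; 292; 181; 192; 164; 150; 336; 27; 306; 278; 97; 248; 141; 59; 216; 123; 343; 174; 81; 304; 261; 283; 96; 271; 327; 70; 165; 113; 37; 102; 210; 239; 290; 300; 49; 72; 157; 258; 314; 207; 295; 206; 269; 128; 277; 267; 74; 163; 50; 132; 17; 184; 332; 54; 178; 143; 263; 220; 1; 233; 188; 38; 282; 111; 247; 308; 253; 177; 44; 251; 64; 79; 34; 134; 133; 8; 69; 6; 146; 47; 0; 30; 13; 65; 100; 11; 250; 15; 199; 270; 281; 120; 309; 318; 10; 51; 18; 166; 117; 297; 85; 302; 272; 147; 242; 62; 341; 241; 205; 339; 152; 243; 151; 148; 221; 288; 212; 219; 322; 231; 2; 198; 101; 86; 68; 99; 256; 91; 119; 94; 325; 73; 268; 238; 186; 167; 106; 334; 185; 112; 124; 203; 16; 135; 330; 156; 169; 168; 324; 83; 240; 103; 71; 244; 153; 249; 237; 307; 154; 131; 55; 22; 189; 280; 36; 187; 215; 227; 39; 76; 121; 137; 236; 67; 224; 323; 194; 158; 293; 48; 92; 142; 122; 75; 7; 252; 173; 104; 29; 126;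 226; 171; 335; 340; 53; 313; 149; 110; 208; 255; 319; 190; 57; 257; 4; 275; 90; 19; 303; 301; 41; 201; 45; 78; 312; 115; 287; 260; 25; 328; 60; 35; 298; 211; 162; 222; 9; 89; 285; 259; 58; 127; 42; 118; 337; 33; 61; 139; 296; 95; 266; 180; 21; 321; 316; 14; 176; 155; 223; 254; 305; 265; 43; 342; 56; 31; 26; 12; 289; 209; 77; 326; 130; 3; 191; 46; 273; 320; 228; 310; 160; 311; 175; 286; 229; 32; 84; 294; 40; 279; 159; 276; 109; 88; 93; 107; 264; 291; 234; 20; 225; 329; 140; 262; 144; 129; 114; 108; 213; 200; 333; 246; 24; 183; 338; 214; 193; 217; 196; 230; 66; 235; 218; 284; 317; 161; 52; 315; 170; 331; 98; 28; 197; 105; 5; 195; 274; 87; 63; 116; 145; 80; 125; 182; 232; 179; 202; 204].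
Definition c344 : seq N := [:: 43; 221; 204; 185; 200; 302; 315; 24; 191; 269; 111; 174; 331; 69; 219; 330; 146; 317; 116; 25; 179; 85; 196; 162; 90; 21; 244; 289; 27; 238; 236; 338; 119; 313; 28; 22; 80; 102; 275; 232; 322; 117; 156; 215; 136; 310; 316; 2; 71; 165; 284; 49; 192; 149; 83; 336; 210; 213; 231; 214; 248; 38; 52; 216; 154; 137; 79; 278; 304; 246; 92; 96; 343; 265; 271; 153; 147; 110; 139; 18; 319; 13; 108; 62; 72; 318; 172; 194; 295; 177; 311; 337; 128; 182; 212; 26; 274; 109; 20; 190; 184; 245; 195; 202; 247; 89; 148; 254; 227; 261; 99; 34; 223; 217; 276; 97; 75; 277; 332; 64; 199; 253; 47; 17; 8; 326; 251; 42; 175; 0; 239; 281; 115; 309; 68; 218; 151; 257; 87; 166; 120; 54; 59; 50; 282; 53; 279; 121; 155; 262; 307; 272; 226; 101; 127; 41; 3; 126; 188; 152; 170; 297; 12; 305; 288; 29; 228; 234; 55; 197; 167; 225; 301; 45; 268; 256; 58; 209; 15; 145; 235; 61; 267; 242; 7; 293; 207; 206; 112; 77; 4; 16; 327; 341; 180; 270; 168; 93; 44; 240; 303; 249; 308; 334; 123; 342; 84; 82; 178; 33; 95; 169; 280; 125; 124; 129; 122; 161; 220; 118; 163; 141; 164; 224; 66; 189; 135; 9; 48; 157; 35; 266; 10; 73; 132; 273; 104; 142; 283; 98; 298; 201; 260; 193; 51; 6; 187; 208; 159; 329; 23; 30; 243; 205; 324; 106; 186; 113; 86; 94; 91; 78;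 339; 312; 130; 241; 300; 158; 328; 237; 60; 114; 74; 133; 255; 222; 131; 150; 100; 290; 63; 181; 103; 286; 323; 14; 140; 296; 39; 229; 340; 57; 171; 285; 299; 176; 250; 65; 143; 70; 19; 258; 203; 56; 335; 325; 252; 134; 211; 294; 107; 306; 138; 321; 183; 198; 320; 333; 11; 160; 287; 105; 31; 81; 32; 5; 259; 40; 263; 233; 292; 1; 88; 230; 36; 264; 314; 173; 76; 46; 291; 37; 67; 144].
Definition b34 : seq N := [:: 17; 19; 6; 25; 29; 14; 18; 3; 24; 26; 13; 32; 2; 21; 8; 10; 31; 16; 20; 5; 9; 28; 15; 0; 4; 23; 27; 12; 33; 1; 22; 7; 11; 30].
Definition c34 : seq N := [:: 20; 4; 24; 8; 28; 12; 15; 33; 19; 3; 23; 7; 27; 11; 31; 32; 18; 2; 22; 6; 26; 10; 30; 14; 17; 1; 21; 5; 25; 9; 29; 13; 16; 0].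
Definition b58 : seq N := [:: 29; 31; 6; 37; 12; 43; 47; 20; 53; 26; 30; 3; 36; 9; 42; 44; 19; 50; 25; 56; 2; 33; 8; 39; 14; 16; 49; 22; 55; 28; 32; 5; 38; 11; 15; 46; 21; 52; 27; 0; 4; 35; 10; 41; 45; 18; 51; 24; 57; 1; 34; 7; 40; 13; 17; 48; 23; 54].
Definition c58 : seq N := [:: 34; 6; 38; 10; 42; 14; 46; 18; 50; 22; 25; 55; 29; 1; 33; 5; 37; 9; 41; 13; 45; 17; 49; 21; 53; 54; 28; 0; 32; 4; 36; 8; 40; 12; 44; 16; 48; 20; 52; 24; 27; 57; 31; 3; 35; 7; 39; 11; 43; 15; 47; 19; 51; 23; 26; 56; 30; 2].
Definition b82 : seq N := [:: 41; 43; 6; 49; 12; 55; 18; 61; 65; 26; 71; 32; 77; 38; 42; 3; 48; 9; 54; 15; 60; 62; 25; 68; 31; 74; 37; 80; 2; 45; 8; 51; 14; 57; 20; 22; 67; 28; 73; 34; 79; 40; 44; 5; 50; 11; 56; 17; 21; 64; 27; 70; 33; 76; 39; 0; 4; 47; 10; 53; 16; 59; 63; 24; 69; 30; 75; 36; 81; 1; 46; 7; 52; 13; 58; 19; 23; 66; 29; 72; 35; 78].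
Definition c82 : seq N := [:: 48; 8; 52; 12; 56; 16; 60; 20; 64; 24; 68; 28; 72; 32; 35; 77; 39; 81; 43; 3; 47; 7; 51; 11; 55; 15; 59; 19; 63; 23; 67; 27; 71; 31; 75; 76; 38; 80; 42; 2; 46; 6; 50; 10; 54; 14; 58; 18; 62; 22; 66; 26; 70; 30; 74; 34; 37; 79; 41; 1; 45; 5; 49; 9; 53; 13; 57; 17; 61; 21; 65; 25; 69; 29; 73; 33; 36; 78; 40; 0; 44; 4].
Definition b106 : seq N := [:: 53; 55; 6; 61; 12; 67; 18; 73; 24; 79; 83; 32; 89; 38; 95; 44; 101; 50; 54; 3; 60; 9; 66; 15; 72; 21; 78; 80; 31; 86; 37; 92; 43; 98; 49; 104; 2; 57; 8; 63; 14; 69; 20; 75; 26; 28; 85; 34; 91; 40; 97; 46; 103; 52; 56; 5; 62; 11; 68; 17; 74; 23; 27; 82; 33; 88; 39; 94; 45; 100; 51; 0; 4; 59; 10; 65; 16; 71; 22; 77; 81; 30; 87; 36; 93; 42; 99; 48; 105; 1; 58; 7; 64; 13; 70; 19; 76; 25; 29; 84; 35; 90; 41; 96; 47; 102].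
Definition c106 : seq N := [:: 62; 10; 66; 14; 70; 18; 74; 22; 78; 26; 82; 30; 86; 34; 90; 38; 94; 42; 45; 99; 49; 103; 53; 1; 57; 5; 61; 9; 65; 13; 69; 17; 73; 21; 77; 25; 81; 29; 85; 33; 89; 37; 93; 41; 97; 98; 48; 102; 52; 0; 56; 4; 60; 8; 64; 12; 68; 16; 72; 20; 76; 24; 80; 28; 84; 32; 88; 36; 92; 40; 96; 44; 47; 101; 51; 105; 55; 3; 59; 7; 63; 11; 67; 15; 71; 19; 75; 23; 79; 27; 83; 31; 87; 35; 91; 39; 95; 43; 46; 100; 50; 104; 54; 2; 58; 6].
Definition b130 : seq N := [:: 65; 67; 6; 73; 12; 79; 18; 85; 24; 91; 30; 97; 101; 38; 107; 44; 113; 50; 119; 56; 125; 62; 66; 3; 72; 9; 78; 15; 84; 21; 90; 27; 96; 98; 37; 104; 43; 110; 49; 116; 55; 122; 61; 128; 2; 69; 8; 75; 14; 81; 20; 87; 26; 93; 32; 34; 103; 40; 109; 46; 115; 52; 121; 58; 127; 64; 68; 5; 74; 11; 80; 17; 86; 23; 92; 29; 33; 100; 39; 106; 45; 112; 51; 118; 57; 124; 63; 0; 4; 71; 10; 77; 16; 83; 22; 89; 28; 95; 99; 36; 105; 42; 111; 48; 117; 54; 123; 60; 129; 1; 70; 7; 76; 13; 82; 19; 88; 25; 94; 31; 35; 102; 41; 108; 47; 114; 53; 120; 59; 126].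
Definition c130 : seq N := [:: 76; 12; 80; 16; 84; 20; 88; 24; 92; 28; 96; 32; 100; 36; 104; 40; 108; 44; 112; 48; 116; 52; 55; 121; 59; 125; 63; 129; 67; 3; 71; 7; 75; 11; 79; 15; 83; 19; 87; 23; 91; 27; 95; 31; 99; 35; 103; 39; 107; 43; 111; 47; 115; 51; 119; 120; 58; 124; 62; 128; 66; 2; 70; 6; 74; 10; 78; 14; 82; 18; 86; 22; 90; 26; 94; 30; 98; 34; 102; 38; 106; 42; 110; 46; 114; 50; 118; 54; 57; 123; 61; 127; 65; 1; 69; 5; 73; 9; 77; 13; 81; 17; 85; 21; 89; 25; 93; 29; 97; 33; 101; 37; 105; 41; 109; 45; 113; 49; 117; 53; 56; 122; 60; 126; 64; 0; 68; 4; 72; 8].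
Definition b154 : seq N := [:: 77; 79; 6; 85; 12; 91; 18; 97; 24; 103; 30; 109; 36; 115; 119; 44; 125; 50; 131; 56; 137; 62; 143; 68; 149; 74; 78; 3; 84; 9; 90; 15; 96; 21; 102; 27; 108; 33; 114; 116; 43; 122; 49; 128; 55; 134; 61; 140; 67; 146; 73; 152; 2; 81; 8; 87; 14; 93; 20; 99; 26; 105; 32; 111; 38; 40; 121; 46; 127; 52; 133; 58; 139; 64; 145; 70; 151; 76; 80; 5; 86; 11; 92; 17; 98; 23; 104; 29; 110; 35; 39; 118; 45; 124; 51; 130; 57; 136; 63; 142; 69; 148; 75; 0; 4; 83; 10; 89; 16; 95; 22; 101; 28; 107; 34; 113; 117; 42; 123; 48; 129; 54; 135; 60; 141; 66; 147; 72; 153; 1; 82; 7; 88; 13; 94; 19; 100; 25; 106; 31; 112; 37; 41; 120; 47; 126; 53; 132; 59; 138; 65; 144; 71; 150].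
Definition c154 : seq N := [:: 90; 14; 94; 18; 98; 22; 102; 26; 106; 30; 110; 34; 114; 38; 118; 42; 122; 46; 126; 50; 130; 54; 134; 58; 138; 62; 65; 143; 69; 147; 73; 151; 77; 1; 81; 5; 85; 9; 89; 13; 93; 17; 97; 21; 101; 25; 105; 29; 109; 33; 113; 37; 117; 41; 121; 45; 125; 49; 129; 53; 133; 57; 137; 61; 141; 142; 68; 146; 72; 150; 76; 0; 80; 4; 84; 8; 88; 12; 92; 16; 96; 20; 100; 24; 104; 28; 108; 32; 112; 36; 116; 40; 120; 44; 124; 48; 128; 52; 132; 56; 136; 60; 140; 64; 67; 145; 71; 149; 75; 153; 79; 3; 83; 7; 87; 11; 91; 15; 95; 19; 99; 23; 103; 27; 107; 31; 111; 35; 115; 39; 119; 43; 123; 47; 127; 51; 131; 55; 135; 59; 139; 63; 66; 144; 70; 148; 74; 152; 78; 2; 82; 6; 86; 10].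
Definition b178 : seq N := [:: 89; 91; 6; 97; 12; 103; 18; 109; 24; 115; 30; 121; 36; 127; 42; 133; 137; 50; 143; 56; 149; 62; 155; 68; 161; 74; 167; 80; 173; 86; 90; 3; 96; 9; 102; 15; 108; 21; 114; 27; 120; 33; 126; 39; 132; 134; 49; 140; 55; 146; 61; 152; 67; 158; 73; 164; 79; 170; 85; 176; 2; 93; 8; 99; 14; 105; 20; 111; 26; 117; 32; 123; 38; 129; 44; 46; 139; 52; 145; 58; 151; 64; 157; 70; 163; 76; 169; 82; 175; 88; 92; 5; 98; 11; 104; 17; 110; 23; 116; 29; 122; 35; 128; 41; 45; 136; 51; 142; 57; 148; 63; 154; 69; 160; 75; 166; 81; 172; 87; 0; 4; 95; 10; 101; 16; 107; 22; 113; 28; 119; 34; 125; 40; 131; 135; 48; 141; 54; 147; 60; 153; 66; 159; 72; 165; 78; 171; 84; 177; 1; 94; 7; 100; 13; 106; 19; 112; 25; 118; 31; 124; 37; 130; 43; 47; 138; 53; 144; 59; 150; 65; 156; 71; 162; 77; 168; 83; 174].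
Definition c178 : seq N := [:: 104; 16; 108; 20; 112; 24; 116; 28; 120; 32; 124; 36; 128; 40; 132; 44; 136; 48; 140; 52; 144; 56; 148; 60; 152; 64; 156; 68; 160; 72; 75; 165; 79; 169; 83; 173; 87; 177; 91; 3; 95; 7; 99; 11; 103; 15; 107; 19; 111; 23; 115; 27; 119; 31; 123; 35; 127; 39; 131; 43; 135; 47; 139; 51; 143; 55; 147; 59; 151; 63; 155; 67; 159; 71; 163; 164; 78; 168; 82; 172; 86; 176; 90; 2; 94; 6; 98; 10; 102; 14; 106; 18; 110; 22; 114; 26; 118; 30; 122; 34; 126; 38; 130; 42; 134; 46; 138; 50; 142; 54; 146; 58; 150; 62; 154; 66; 158; 70; 162; 74; 77; 167; 81; 171; 85; 175; 89; 1; 93; 5; 97; 9; 101; 13; 105; 17; 109; 21; 113; 25; 117; 29; 121; 33; 125; 37; 129; 41; 133; 45; 137; 49; 141; 53; 145; 57; 149; 61; 153; 65; 157; 69; 161; 73; 76; 166; 80; 170; 84; 174; 88; 0; 92; 4; 96; 8; 100; 12].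
Definition b202 : seq N := [:: 101; 103; 6; 109; 12; 115; 18; 121; 24; 127; 30; 133; 36; 139; 42; 145; 48; 151; 155; 56; 161; 62; 167; 68; 173; 74; 179; 80; 185; 86; 191; 92; 197; 98; 102; 3; 108; 9; 114; 15; 120; 21; 126; 27; 132; 33; 138; 39; 144; 45; 150; 152; 55; 158; 61; 164; 67; 170; 73; 176; 79; 182; 85; 188; 91; 194; 97; 200; 2; 105; 8; 111; 14; 117; 20; 123; 26; 129; 32; 135; 38; 141; 44; 147; 50; 52; 157; 58; 163; 64; 169; 70; 175; 76; 181; 82; 187; 88; 193; 94; 199; 100; 104; 5; 110; 11; 116; 17; 122; 23; 128; 29; 134; 35; 140; 41; 146; 47; 51; 154; 57; 160; 63; 166; 69; 172; 75; 178; 81; 184; 87; 190; 93; 196; 99; 0; 4; 107; 10; 113; 16; 119; 22; 125; 28; 131; 34; 137; 40; 143; 46; 149; 153; 54; 159; 60; 165; 66; 171; 72; 177; 78; 183; 84; 189; 90; 195; 96; 201; 1; 106; 7; 112; 13; 118; 19; 124; 25; 130; 31; 136; 37; 142; 43; 148; 49; 53; 156; 59; 162; 65; 168; 71; 174; 77; 180; 83; 186; 89; 192; 95; 198].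
Definition c202 : seq N := [:: 118; 18; 122; 22; 126; 26; 130; 30; 134; 34; 138; 38; 142; 42; 146; 46; 150; 50; 154; 54; 158; 58; 162; 62; 166; 66; 170; 70; 174; 74; 178; 78; 182; 82; 85; 187; 89; 191; 93; 195; 97; 199; 101; 1; 105; 5; 109; 9; 113; 13; 117; 17; 121; 21; 125; 25; 129; 29; 133; 33; 137; 37; 141; 41; 145; 45; 149; 49; 153; 53; 157; 57; 161; 61; 165; 65; 169; 69; 173; 73; 177; 77; 181; 81; 185; 186; 88; 190; 92; 194; 96; 198; 100; 0; 104; 4; 108; 8; 112; 12; 116; 16; 120; 20; 124; 24; 128; 28; 132; 32; 136; 36; 140; 40; 144; 44; 148; 48; 152; 52; 156; 56; 160; 60; 164; 64; 168; 68; 172; 72; 176; 76; 180; 80; 184; 84; 87; 189; 91; 193; 95; 197; 99; 201; 103; 3; 107; 7; 111; 11; 115; 15; 119; 19; 123; 23; 127; 27; 131; 31; 135; 35; 139; 39; 143; 43; 147; 47; 151; 51; 155; 55; 159; 59; 163; 63; 167; 67; 171; 71; 175; 75; 179; 79; 183; 83; 86; 188; 90; 192; 94; 196; 98; 200; 102; 2; 106; 6; 110; 10; 114; 14].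
Definition b226 : seq N := [:: 113; 115; 6; 121; 12; 127; 18; 133; 24; 139; 30; 145; 36; 151; 42; 157; 48; 163; 54; 169; 173; 62; 179; 68; 185; 74; 191; 80; 197; 86; 203; 92; 209; 98; 215; 104; 221; 110; 114; 3; 120; 9; 126; 15; 132; 21; 138; 27; 144; 33; 150; 39; 156; 45; 162; 51; 168; 170; 61; 176; 67; 182; 73; 188; 79; 194; 85; 200; 91; 206; 97; 212; 103; 218; 109; 224; 2; 117; 8; 123; 14; 129; 20; 135; 26; 141; 32; 147; 38; 153; 44; 159; 50; 165; 56; 58; 175; 64; 181; 70; 187; 76; 193; 82; 199; 88; 205; 94; 211; 100; 217; 106; 223; 112; 116; 5; 122; 11; 128; 17; 134; 23; 140; 29; 146; 35; 152; 41; 158; 47; 164; 53; 57; 172; 63; 178; 69; 184; 75; 190; 81; 196; 87; 202; 93; 208; 99; 214; 105; 220; 111; 0; 4; 119; 10; 125; 16; 131; 22; 137; 28; 143; 34; 149; 40; 155; 46; 161; 52; 167; 171; 60; 177; 66; 183; 72; 189; 78; 195; 84; 201; 90; 207; 96; 213; 102; 219; 108; 225; 1; 118; 7; 124; 13; 130; 19; 136; 25; 142; 31; 148; 37; 154; 43; 160; 49; 166; 55; 59; 174; 65; 180; 71; 186; 77; 192; 83; 198; 89; 204; 95; 210; 101; 216; 107; 222].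
Definition c226 : seq N := [:: 132; 20; 136; 24; 140; 28; 144; 32; 148; 36; 152; 40; 156; 44; 160; 48; 164; 52; 168; 56; 172; 60; 176; 64; 180; 68; 184; 72; 188; 76; 192; 80; 196; 84; 200; 88; 204; 92; 95; 209; 99; 213; 103; 217; 107; 221; 111; 225; 115; 3; 119; 7; 123; 11; 127; 15; 131; 19; 135; 23; 139; 27; 143; 31; 147; 35; 151; 39; 155; 43; 159; 47; 163; 51; 167; 55; 171; 59; 175; 63; 179; 67; 183; 71; 187; 75; 191; 79; 195; 83; 199; 87; 203; 91; 207; 208; 98; 212; 102; 216; 106; 220; 110; 224; 114; 2; 118; 6; 122; 10; 126; 14; 130; 18; 134; 22; 138; 26; 142; 30; 146; 34; 150; 38; 154; 42; 158; 46; 162; 50; 166; 54; 170; 58; 174; 62; 178; 66; 182; 70; 186; 74; 190; 78; 194; 82; 198; 86; 202; 90; 206; 94; 97; 211; 101; 215; 105; 219; 109; 223; 113; 1; 117; 5; 121; 9; 125; 13; 129; 17; 133; 21; 137; 25; 141; 29; 145; 33; 149; 37; 153; 41; 157; 45; 161; 49; 165; 53; 169; 57; 173; 61; 177; 65; 181; 69; 185; 73; 189; 77; 193; 81; 197; 85; 201; 89; 205; 93; 96; 210; 100; 214; 104; 218; 108; 222; 112; 0; 116; 4; 120; 8; 124; 12; 128; 16].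
Definition b250 : seq N := [:: 125; 127; 6; 133; 12; 139; 18; 145; 24; 151; 30; 157; 36; 163; 42; 169; 48; 175; 54; 181; 60; 187; 191; 68; 197; 74; 203; 80; 209; 86; 215; 92; 221; 98; 227; 104; 233; 110; 239; 116; 245; 122; 126; 3; 132; 9; 138; 15; 144; 21; 150; 27; 156; 33; 162; 39; 168; 45; 174; 51; 180; 57; 186; 188; 67; 194; 73; 200; 79; 206; 85; 212; 91; 218; 97; 224; 103; 230; 109; 236; 115; 242; 121; 248; 2; 129; 8; 135; 14; 141; 20; 147; 26; 153; 32; 159; 38; 165; 44; 171; 50; 177; 56; 183; 62; 64; 193; 70; 199; 76; 205; 82; 211; 88; 217; 94; 223; 100; 229; 106; 235; 112; 241; 118; 247; 124; 128; 5; 134; 11; 140; 17; 146; 23; 152; 29; 158; 35; 164; 41; 170; 47; 176; 53; 182; 59; 63; 190; 69; 196; 75; 202; 81; 208; 87; 214; 93; 220; 99; 226; 105; 232; 111; 238; 117; 244; 123; 0; 4; 131; 10; 137; 16; 143; 22; 149; 28; 155; 34; 161; 40; 167; 46; 173; 52; 179; 58; 185; 189; 66; 195; 72; 201; 78; 207; 84; 213; 90; 219; 96; 225; 102; 231; 108; 237; 114; 243; 120; 249; 1; 130; 7; 136; 13; 142; 19; 148; 25; 154; 31; 160; 37; 166; 43; 172; 49; 178; 55; 184; 61; 65; 192; 71; 198; 77; 204; 83; 210; 89; 216; 95; 222; 101; 228; 107; 234; 113; 240; 119; 246].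
Definition c250 : seq N := [:: 146; 22; 150; 26; 154; 30; 158; 34; 162; 38; 166; 42; 170; 46; 174; 50; 178; 54; 182; 58; 186; 62; 190; 66; 194; 70; 198; 74; 202; 78; 206; 82; 210; 86; 214; 90; 218; 94; 222; 98; 226; 102; 105; 231; 109; 235; 113; 239; 117; 243; 121; 247; 125; 1; 129; 5; 133; 9; 137; 13; 141; 17; 145; 21; 149; 25; 153; 29; 157; 33; 161; 37; 165; 41; 169; 45; 173; 49; 177; 53; 181; 57; 185; 61; 189; 65; 193; 69; 197; 73; 201; 77; 205; 81; 209; 85; 213; 89; 217; 93; 221; 97; 225; 101; 229; 230; 108; 234; 112; 238; 116; 242; 120; 246; 124; 0; 128; 4; 132; 8; 136; 12; 140; 16; 144; 20; 148; 24; 152; 28; 156; 32; 160; 36; 164; 40; 168; 44; 172; 48; 176; 52; 180; 56; 184; 60; 188; 64; 192; 68; 196; 72; 200; 76; 204; 80; 208; 84; 212; 88; 216; 92; 220; 96; 224; 100; 228; 104; 107; 233; 111; 237; 115; 241; 119; 245; 123; 249; 127; 3; 131; 7; 135; 11; 139; 15; 143; 19; 147; 23; 151; 27; 155; 31; 159; 35; 163; 39; 167; 43; 171; 47; 175; 51; 179; 55; 183; 59; 187; 63; 191; 67; 195; 71; 199; 75; 203; 79; 207; 83; 211; 87; 215; 91; 219; 95; 223; 99; 227; 103; 106; 232; 110; 236; 114; 240; 118; 244; 122; 248; 126; 2; 130; 6; 134; 10; 138; 14; 142; 18].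
Definition b274 : seq N := [:: 137; 139; 6; 145; 12; 151; 18; 157; 24; 163; 30; 169; 36; 175; 42; 181; 48; 187; 54; 193; 60; 199; 66; 205; 209; 74; 215; 80; 221; 86; 227; 92; 233; 98; 239; 104; 245; 110; 251; 116; 257; 122; 263; 128; 269; 134; 138; 3; 144; 9; 150; 15; 156; 21; 162; 27; 168; 33; 174; 39; 180; 45; 186; 51; 192; 57; 198; 63; 204; 206; 73; 212; 79; 218; 85; 224; 91; 230; 97; 236; 103; 242; 109; 248; 115; 254; 121; 260; 127; 266; 133; 272; 2; 141; 8; 147; 14; 153; 20; 159; 26; 165; 32; 171; 38; 177; 44; 183; 50; 189; 56; 195; 62; 201; 68; 70; 211; 76; 217; 82; 223; 88; 229; 94; 235; 100; 241; 106; 247; 112; 253; 118; 259; 124; 265; 130; 271; 136; 140; 5; 146; 11; 152; 17; 158; 23; 164; 29; 170; 35; 176; 41; 182; 47; 188; 53; 194; 59; 200; 65; 69; 208; 75; 214; 81; 220; 87; 226; 93; 232; 99; 238; 105; 244; 111; 250; 117; 256; 123; 262; 129; 268; 135; 0; 4; 143; 10; 149; 16; 155; 22; 161; 28; 167; 34; 173; 40; 179; 46; 185; 52; 191; 58; 197; 64; 203; 207; 72; 213; 78; 219; 84; 225; 90; 231; 96; 237; 102; 243; 108; 249; 114; 255; 120; 261; 126; 267; 132; 273; 1; 142; 7; 148; 13; 154; 19; 160; 25; 166; 31; 172; 37; 178; 43; 184; 49; 190; 55; 196; 61; 202; 67; 71; 210; 77; 216; 83; 222; 89; 228; 95; 234;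 101; 240; 107; 246; 113; 252; 119; 258; 125; 264; 131; 270].
Definition c274 : seq N := [:: 160; 24; 164; 28; 168; 32; 172; 36; 176; 40; 180; 44; 184; 48; 188; 52; 192; 56; 196; 60; 200; 64; 204; 68; 208; 72; 212; 76; 216; 80; 220; 84; 224; 88; 228; 92; 232; 96; 236; 100; 240; 104; 244; 108; 248; 112; 115; 253; 119; 257; 123; 261; 127; 265; 131; 269; 135; 273; 139; 3; 143; 7; 147; 11; 151; 15; 155; 19; 159; 23; 163; 27; 167; 31; 171; 35; 175; 39; 179; 43; 183; 47; 187; 51; 191; 55; 195; 59; 199; 63; 203; 67; 207; 71; 211; 75; 215; 79; 219; 83; 223; 87; 227; 91; 231; 95; 235; 99; 239; 103; 243; 107; 247; 111; 251; 252; 118; 256; 122; 260; 126; 264; 130; 268; 134; 272; 138; 2; 142; 6; 146; 10; 150; 14; 154; 18; 158; 22; 162; 26; 166; 30; 170; 34; 174; 38; 178; 42; 182; 46; 186; 50; 190; 54; 194; 58; 198; 62; 202; 66; 206; 70; 210; 74; 214; 78; 218; 82; 222; 86; 226; 90; 230; 94; 234; 98; 238; 102; 242; 106; 246; 110; 250; 114; 117; 255; 121; 259; 125; 263; 129; 267; 133; 271; 137; 1; 141; 5; 145; 9; 149; 13; 153; 17; 157; 21; 161; 25; 165; 29; 169; 33; 173; 37; 177; 41; 181; 45; 185; 49; 189; 53; 193; 57; 197; 61; 201; 65; 205; 69; 209; 73; 213; 77; 217; 81; 221; 85; 225; 89; 229; 93; 233; 97; 237; 101; 241; 105; 245; 109;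 249; 113; 116; 254; 120; 258; 124; 262; 128; 266; 132; 270; 136; 0; 140; 4; 144; 8; 148; 12; 152; 16; 156; 20].
Definition b298 : seq N := [:: 149; 151; 6; 157; 12; 163; 18; 169; 24; 175; 30; 181; 36; 187; 42; 193; 48; 199; 54; 205; 60; 211; 66; 217; 72; 223; 227; 80; 233; 86; 239; 92; 245; 98; 251; 104; 257; 110; 263; 116; 269; 122; 275; 128; 281; 134; 287; 140; 293; 146; 150; 3; 156; 9; 162; 15; 168; 21; 174; 27; 180; 33; 186; 39; 192; 45; 198; 51; 204; 57; 210; 63; 216; 69; 222; 224; 79; 230; 85; 236; 91; 242; 97; 248; 103; 254; 109; 260; 115; 266; 121; 272; 127; 278; 133; 284; 139; 290; 145; 296; 2; 153; 8; 159; 14; 165; 20; 171; 26; 177; 32; 183; 38; 189; 44; 195; 50; 201; 56; 207; 62; 213; 68; 219; 74; 76; 229; 82; 235; 88; 241; 94; 247; 100; 253; 106; 259; 112; 265; 118; 271; 124; 277; 130; 283; 136; 289; 142; 295; 148; 152; 5; 158; 11; 164; 17; 170; 23; 176; 29; 182; 35; 188; 41; 194; 47; 200; 53; 206; 59; 212; 65; 218; 71; 75; 226; 81; 232; 87; 238; 93; 244; 99; 250; 105; 256; 111; 262; 117; 268; 123; 274; 129; 280; 135; 286; 141; 292; 147; 0; 4; 155; 10; 161; 16; 167; 22; 173; 28; 179; 34; 185; 40; 191; 46; 197; 52; 203; 58; 209; 64; 215; 70; 221; 225; 78; 231; 84; 237; 90; 243; 96; 249; 102; 255; 108; 261; 114;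 267; 120; 273; 126; 279; 132; 285; 138; 291; 144; 297; 1; 154; 7; 160; 13; 166; 19; 172; 25; 178; 31; 184; 37; 190; 43; 196; 49; 202; 55; 208; 61; 214; 67; 220; 73; 77; 228; 83; 234; 89; 240; 95; 246; 101; 252; 107; 258; 113; 264; 119; 270; 125; 276; 131; 282; 137; 288; 143; 294].
Definition c298 : seq N := [:: 174; 26; 178; 30; 182; 34; 186; 38; 190; 42; 194; 46; 198; 50; 202; 54; 206; 58; 210; 62; 214; 66; 218; 70; 222; 74; 226; 78; 230; 82; 234; 86; 238; 90; 242; 94; 246; 98; 250; 102; 254; 106; 258; 110; 262; 114; 266; 118; 270; 122; 125; 275; 129; 279; 133; 283; 137; 287; 141; 291; 145; 295; 149; 1; 153; 5; 157; 9; 161; 13; 165; 17; 169; 21; 173; 25; 177; 29; 181; 33; 185; 37; 189; 41; 193; 45; 197; 49; 201; 53; 205; 57; 209; 61; 213; 65; 217; 69; 221; 73; 225; 77; 229; 81; 233; 85; 237; 89; 241; 93; 245; 97; 249; 101; 253; 105; 257; 109; 261; 113; 265; 117; 269; 121; 273; 274; 128; 278; 132; 282; 136; 286; 140; 290; 144; 294; 148; 0; 152; 4; 156; 8; 160; 12; 164; 16; 168; 20; 172; 24; 176; 28; 180; 32; 184; 36; 188; 40; 192; 44; 196; 48; 200; 52; 204; 56; 208; 60; 212; 64; 216; 68; 220; 72; 224; 76; 228; 80; 232; 84; 236; 88; 240; 92; 244; 96; 248; 100; 252; 104; 256; 108; 260; 112; 264; 116; 268; 120; 272; 124; 127; 277;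 131; 281; 135; 285; 139; 289; 143; 293; 147; 297; 151; 3; 155; 7; 159; 11; 163; 15; 167; 19; 171; 23; 175; 27; 179; 31; 183; 35; 187; 39; 191; 43; 195; 47; 199; 51; 203; 55; 207; 59; 211; 63; 215; 67; 219; 71; 223; 75; 227; 79; 231; 83; 235; 87; 239; 91; 243; 95; 247; 99; 251; 103; 255; 107; 259; 111; 263; 115; 267; 119; 271; 123; 126; 276; 130; 280; 134; 284; 138; 288; 142; 292; 146; 296; 150; 2; 154; 6; 158; 10; 162; 14; 166; 18; 170; 22].
Definition b322 : seq N := [:: 161; 163; 6; 169; 12; 175; 18; 181; 24; 187; 30; 193; 36; 199; 42; 205; 48; 211; 54; 217; 60; 223; 66; 229; 72; 235; 78; 241; 245; 86; 251; 92; 257; 98; 263; 104; 269; 110; 275; 116; 281; 122; 287; 128; 293; 134; 299; 140; 305; 146; 311; 152; 317; 158; 162; 3; 168; 9; 174; 15; 180; 21; 186; 27; 192; 33; 198; 39; 204; 45; 210; 51; 216; 57; 222; 63; 228; 69; 234; 75; 240; 242; 85; 248; 91; 254; 97; 260; 103; 266; 109; 272; 115; 278; 121; 284; 127; 290; 133; 296; 139; 302; 145; 308; 151; 314; 157; 320; 2; 165; 8; 171; 14; 177; 20; 183; 26; 189; 32; 195; 38; 201; 44; 207; 50; 213; 56; 219; 62; 225; 68; 231; 74; 237; 80; 82; 247; 88; 253; 94; 259; 100; 265; 106; 271; 112; 277; 118; 283; 124; 289; 130; 295; 136; 301; 142; 307; 148; 313; 154; 319; 160; 164; 5; 170; 11;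 176; 17; 182; 23; 188; 29; 194; 35; 200; 41; 206; 47; 212; 53; 218; 59; 224; 65; 230; 71; 236; 77; 81; 244; 87; 250; 93; 256; 99; 262; 105; 268; 111; 274; 117; 280; 123; 286; 129; 292; 135; 298; 141; 304; 147; 310; 153; 316; 159; 0; 4; 167; 10; 173; 16; 179; 22; 185; 28; 191; 34; 197; 40; 203; 46; 209; 52; 215; 58; 221; 64; 227; 70; 233; 76; 239; 243; 84; 249; 90; 255; 96; 261; 102; 267; 108; 273; 114; 279; 120; 285; 126; 291; 132; 297; 138; 303; 144; 309; 150; 315; 156; 321; 1; 166; 7; 172; 13; 178; 19; 184; 25; 190; 31; 196; 37; 202; 43; 208; 49; 214; 55; 220; 61; 226; 67; 232; 73; 238; 79; 83; 246; 89; 252; 95; 258; 101; 264; 107; 270; 113; 276; 119; 282; 125; 288; 131; 294; 137; 300; 143; 306; 149; 312; 155; 318].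
Definition c322 : seq N := [:: 188; 28; 192; 32; 196; 36; 200; 40; 204; 44; 208; 48; 212; 52; 216; 56; 220; 60; 224; 64; 228; 68; 232; 72; 236; 76; 240; 80; 244; 84; 248; 88; 252; 92; 256; 96; 260; 100; 264; 104; 268; 108; 272; 112; 276; 116; 280; 120; 284; 124; 288; 128; 292; 132; 135; 297; 139; 301; 143; 305; 147; 309; 151; 313; 155; 317; 159; 321; 163; 3; 167; 7; 171; 11; 175; 15; 179; 19; 183; 23; 187; 27; 191; 31; 195; 35; 199; 39; 203; 43; 207; 47; 211; 51; 215; 55; 219; 59; 223; 63; 227; 67; 231; 71; 235; 75; 239; 79; 243; 83; 247; 87; 251; 91; 255; 95; 259; 99; 263; 103; 267; 107; 271; 111; 275; 115; 279; 119; 283; 123; 287; 127; 291; 131; 295; 296; 138; 300; 142; 304; 146; 308; 150; 312; 154; 316; 158; 320; 162; 2; 166; 6; 170; 10; 174; 14; 178; 18; 182; 22; 186; 26; 190; 30; 194; 34; 198; 38; 202; 42; 206; 46; 210; 50; 214; 54; 218; 58; 222; 62; 226; 66; 230; 70; 234; 74; 238; 78; 242; 82; 246; 86; 250; 90; 254; 94; 258; 98; 262; 102; 266; 106; 270; 110; 274; 114; 278; 118; 282; 122; 286; 126; 290; 130; 294; 134; 137; 299; 141; 303; 145; 307; 149; 311; 153; 315; 157; 319; 161; 1; 165; 5; 169; 9; 173; 13; 177; 17; 181; 21; 185; 25; 189; 29; 193; 33; 197; 37; 201; 41; 205; 45; 209; 49; 213; 53; 217; 57; 221; 61; 225; 65;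 229; 69; 233; 73; 237; 77; 241; 81; 245; 85; 249; 89; 253; 93; 257; 97; 261; 101; 265; 105; 269; 109; 273; 113; 277; 117; 281; 121; 285; 125; 289; 129; 293; 133; 136; 298; 140; 302; 144; 306; 148; 310; 152; 314; 156; 318; 160; 0; 164; 4; 168; 8; 172; 12; 176; 16; 180; 20; 184; 24].
Definition b346 : seq N := [:: 173; 175; 6; 181; 12; 187; 18; 193; 24; 199; 30; 205; 36; 211; 42; 217; 48; 223; 54; 229; 60; 235; 66; 241; 72; 247; 78; 253; 84; 259; 263; 92; 269; 98; 275; 104; 281; 110; 287; 116; 293; 122; 299; 128; 305; 134; 311; 140; 317; 146; 323; 152; 329; 158; 335; 164; 341; 170; 174; 3; 180; 9; 186; 15; 192; 21; 198; 27; 204; 33; 210; 39; 216; 45; 222; 51; 228; 57; 234; 63; 240; 69; 246; 75; 252; 81; 258; 260; 91; 266; 97; 272; 103; 278; 109; 284; 115; 290; 121; 296; 127; 302; 133; 308; 139; 314; 145; 320; 151; 326; 157; 332; 163; 338; 169; 344; 2; 177; 8; 183; 14; 189; 20; 195; 26; 201; 32; 207; 38; 213; 44; 219; 50; 225; 56; 231; 62; 237; 68; 243; 74; 249; 80; 255; 86; 88; 265; 94; 271; 100; 277; 106; 283; 112; 289; 118; 295; 124; 301; 130; 307; 136; 313; 142; 319; 148; 325; 154; 331; 160; 337; 166; 343; 172; 176; 5; 182; 11; 188; 17; 194; 23; 200; 29; 206; 35; 212; 41; 218; 47; 224; 53; 230; 59; 236; 65; 242; 71; 248; 77; 254; 83;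 87; 262; 93; 268; 99; 274; 105; 280; 111; 286; 117; 292; 123; 298; 129; 304; 135; 310; 141; 316; 147; 322; 153; 328; 159; 334; 165; 340; 171; 0; 4; 179; 10; 185; 16; 191; 22; 197; 28; 203; 34; 209; 40; 215; 46; 221; 52; 227; 58; 233; 64; 239; 70; 245; 76; 251; 82; 257; 261; 90; 267; 96; 273; 102; 279; 108; 285; 114; 291; 120; 297; 126; 303; 132; 309; 138; 315; 144; 321; 150; 327; 156; 333; 162; 339; 168; 345; 1; 178; 7; 184; 13; 190; 19; 196; 25; 202; 31; 208; 37; 214; 43; 220; 49; 226; 55; 232; 61; 238; 67; 244; 73; 250; 79; 256; 85; 89; 264; 95; 270; 101; 276; 107; 282; 113; 288; 119; 294; 125; 300; 131; 306; 137; 312; 143; 318; 149; 324; 155; 330; 161; 336; 167; 342].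
Definition c346 : seq N := [:: 202; 30; 206; 34; 210; 38; 214; 42; 218; 46; 222; 50; 226; 54; 230; 58; 234; 62; 238; 66; 242; 70; 246; 74; 250; 78; 254; 82; 258; 86; 262; 90; 266; 94; 270; 98; 274; 102; 278; 106; 282; 110; 286; 114; 290; 118; 294; 122; 298; 126; 302; 130; 306; 134; 310; 138; 314; 142; 145; 319; 149; 323; 153; 327; 157; 331; 161; 335; 165; 339; 169; 343; 173; 1; 177; 5; 181; 9; 185; 13; 189; 17; 193; 21; 197; 25; 201; 29; 205; 33; 209; 37; 213; 41; 217; 45; 221; 49; 225; 53; 229; 57; 233; 61; 237; 65; 241; 69; 245; 73; 249; 77; 253; 81; 257; 85; 261; 89; 265; 93; 269; 97; 273; 101; 277; 105; 281; 109; 285; 113; 289; 117; 293; 121; 297; 125; 301; 129; 305; 133; 309; 137; 313; 141; 317; 318; 148; 322; 152; 326; 156; 330; 160; 334; 164; 338; 168; 342; 172; 0; 176; 4; 180; 8; 184; 12; 188; 16; 192; 20; 196; 24; 200; 28; 204; 32; 208; 36; 212; 40; 216; 44; 220; 48; 224; 52; 228; 56; 232; 60; 236; 64; 240; 68; 244; 72; 248; 76; 252; 80; 256; 84; 260; 88; 264; 92; 268; 96; 272; 100; 276; 104; 280; 108; 284; 112; 288; 116; 292; 120; 296; 124; 300; 128; 304; 132; 308; 136; 312; 140; 316; 144; 147; 321; 151; 325; 155; 329; 159; 333; 163; 337; 167; 341; 171; 345; 175; 3; 179; 7; 183; 11; 187; 15; 191; 19; 195; 23; 199; 27; 203; 31;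 207; 35; 211; 39; 215; 43; 219; 47; 223; 51; 227; 55; 231; 59; 235; 63; 239; 67; 243; 71; 247; 75; 251; 79; 255; 83; 259; 87; 263; 91; 267; 95; 271; 99; 275; 103; 279; 107; 283; 111; 287; 115; 291; 119; 295; 123; 299; 127; 303; 131; 307; 135; 311; 139; 315; 143; 146; 320; 150; 324; 154; 328; 158; 332; 162; 336; 166; 340; 170; 344; 174; 2; 178; 6; 182; 10; 186; 14; 190; 18; 194; 22; 198; 26].
Local Close Scope N_scope.
Definition dca_tables : seq (nat * (seq N * seq N)) :=
  [::
    (26, (b26, c26)); (266, (b266, c266)); (40, (b40, c40)); (56, (b56, c56));
    (88, (b88, c88)); (104, (b104, c104)); (136, (b136, c136)); (152, (b152, c152));
    (184, (b184, c184)); (200, (b200, c200)); (232, (b232, c232)); (248, (b248, c248));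
    (280, (b280, c280)); (296, (b296, c296)); (328, (b328, c328)); (344, (b344, c344));
    (34, (b34, c34)); (58, (b58, c58)); (82, (b82, c82)); (106, (b106, c106));
    (130, (b130, c130)); (154, (b154, c154)); (178, (b178, c178)); (202, (b202, c202));
    (226, (b226, c226)); (250, (b250, c250)); (274, (b274, c274)); (298, (b298, c298));
    (322, (b322, c322)); (346, (b346, c346))].

Lemma dca_tables_ok :
  all (fun t => cols_ok t.1 3 (table_cols t.1 t.2.1 t.2.2)) dca_tables.
Proof. by vm_compute. Qed.

Lemma theorem15_orders_tables : theorem15_orders = map fst dca_tables.
Proof. by []. Qed.

Theorem mainTheorem15 :
  forall n : nat, n \in theorem15_orders ->
    exists Q : 'M['Z_n]_(n.+1, 4),
      is_DCA Q /\ normalized_DCA Q /\ DCA_P1 Q /\ DCA_P2 Q.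
Proof.
move=> n; rewrite theorem15_orders_tables => /mapP[t t_in_tables ->].
exact: cols_ok_DCA (allP dca_tables_ok t t_in_tables).
Qed.
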